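(* Let $\varphi(x)=\sum_{i\ge0}\gamma_ix^i\in\mathbb{K}[[x]]$ and let $r$ be an odd negative integer. Assume $\gamma_i=0$ for each $i\le -r$. Then $\varphi\in\mathcal{F}_r$ if and only if $$\sum_{i=0}^m(-1)^i\binom{m}{i}\frac{m+i}{m}\gamma_{m-r+i}=0\quad\text{for each } m\ge1.$$
   Context: $\mathbb{K}\in\{\mathbb{Q},\mathbb{R},\mathbb{C}\}$. For $r\in\mathbb{Z}$, $\mathcal{F}_r$ denotes the space of $\varphi\in\mathbb{K}[[x]]$ with $\varphi(x/(x-1))=(1-x)^r\varphi(x)$. *)

From HB Require Import structures.
From mathcomp Require Import all_boot all_order all_algebra.
Set Implicit Arguments. Unset Strict Implicit. Unset Printing Implicit Defensive.
Import Order.TTheory GRing.Theory Num.Theory.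
Local Open Scope ring_scope.

(* Formal power series over K, represented by their coefficient sequences:
   phi : nat -> K stands for  \sum_i phi i x^i. *)
Section FPS.
Variable K : numFieldType.

Definition smul (f g : nat -> K) : nat -> K :=
  fun n => \sum_(i < n.+1) f i * g (n - i)%N.

Definition sone : nat -> K := fun n => (n == 0%N)%:R.

Definition sX : nat -> K := fun n => (n == 1%N)%:R.

Definition sexp (f : nat -> K) (k : nat) : nat -> K := iter k (smul f) sone.

Definition s1mX : nat -> K := fun n => sone n - sX n.

(* the series (1 - x)^{-1} = \sum_j x^j *)
Definition sgeom : nat -> K := fun _ => 1.

(* (1 - x)^r in K[[x]] for r : int *)
Definition s1mX_pow (r : int) : nat -> K :=
  match r with
  | Posz n => sexp s1mX n
  | Negz n => sexp sgeom n.+1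
  end.

(* the series x/(x-1) = - x (1-x)^{-1} *)
Definition sxdiv : nat -> K := fun n => - smul sX sgeom n.

(* composition phi(psi(x)), for psi with zero constant term: the coefficient
   of x^n only involves the powers psi^k with k <= n *)
Definition scomp (phi psi : nat -> K) : nat -> K :=
  fun n => \sum_(k < n.+1) phi k * sexp psi k n.

(* phi \in F_r  <->  phi(x/(x-1)) = (1-x)^r phi(x) *)
Definition in_F (r : int) (phi : nat -> K) : Prop :=
  forall n, scomp phi sxdiv n = smul (s1mX_pow r) phi n.

End FPS.

From HB Require Import structures.
From mathcomp Require Import all_boot all_order all_algebra.
From Stdlib Require Import FunctionalExtensionality.
From mathcomp Require Import zify ring.
Set Implicit Arguments. Unset Strict Implicit. Unset Printing Implicit Defensive.
Import Order.TTheory GRing.Theory Num.Theory.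
Local Open Scope ring_scope.

(* Write r = -s, s odd. Multiplying by (1 - x)^s, membership in F_r reads
   (1 - x)^s phi(x/(x-1)) = phi, and since
   (1 - x)^s (x/(x-1))^k = (-1)^k x^k (1 - x)^(s-k), on the shifted
   coefficients g_b = gamma_(s+1+b) this says that g is fixed by the binomial
   transform (T g)_a = sum_b (-1)^b C(a,b) g_b.  T is an involution and the
   linear forms c_m of the statement satisfy c_m(T g) = - c_m(g), so fixed
   points satisfy c_m = 0.  Conversely h = g - T g is then anti-fixed with all
   c_m(h) = 0, and these conditions are triangular in h, forcing h = 0. *)

Section SeriesAlgebra.
Variable K : numFieldType.
Implicit Types (f g h : nat -> K) (c : K).

Definition trunc f N : {poly K} := \poly_(i < N.+1) f i.

Lemma smulE f g n N : (n <= N)%N -> smul f g n = (trunc f N * trunc g N)`_n.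
Proof.
move=> hn; rewrite coefM; apply: eq_bigr => i _.
have hi : (i < N.+1)%N by rewrite ltnS (leq_trans _ hn) // -ltnS.
by rewrite !coef_poly hi ltnS (leq_trans (leq_subr _ _) hn).
Qed.

Lemma coef_trunc_smul f g N i : (i <= N)%N ->
  (trunc (smul f g) N)`_i = (trunc f N * trunc g N)`_i.
Proof. by move=> hi; rewrite coef_poly ltnS hi (smulE _ _ hi). Qed.

Lemma coefM_congrl (p q s : {poly K}) n :
  (forall i, (i <= n)%N -> p`_i = q`_i) -> (p * s)`_n = (q * s)`_n.
Proof. by move=> epq; rewrite !coefM; apply: eq_bigr => i _; rewrite epq // -ltnS. Qed.

Lemma smulC f g : smul f g = smul g f.
Proof.
by apply: functional_extensionality => n; rewrite !(smulE _ _ (leqnn n)) mulrC.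
Qed.

Lemma smulA f g h : smul (smul f g) h = smul f (smul g h).
Proof.
apply: functional_extensionality => n; rewrite !(smulE _ _ (leqnn n)).
rewrite (coefM_congrl _ (@coef_trunc_smul f g n)).
rewrite [_ * trunc (smul g h) n]mulrC.
by rewrite (coefM_congrl _ (@coef_trunc_smul g h n)) -mulrA mulrC.
Qed.

Lemma smul1 f : smul (sone K) f = f.
Proof.
apply: functional_extensionality => n.
rewrite /smul big_ord_recl /sone /= mul1r subn0 big1 ?addr0 // => i _.
by rewrite mul0r.
Qed.

Lemma smulBl f g h :
  smul (fun n => f n - g n) h = (fun n => smul f h n - smul g h n).
Proof.
apply: functional_extensionality => n.
by rewrite /smul -sumrB; apply: eq_bigr => i _; rewrite mulrBl.
Qed.

Definition sscale c f : nat -> K := fun n => c * f n.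

Lemma smulZl c f g : smul (sscale c f) g = sscale c (smul f g).
Proof.
apply: functional_extensionality => n.
by rewrite /smul /sscale mulr_sumr; apply: eq_bigr => i _; rewrite mulrA.
Qed.

Lemma smulZr c f g : smul f (sscale c g) = sscale c (smul f g).
Proof. by rewrite smulC smulZl smulC. Qed.

Lemma sexpS f k : sexp f k.+1 = smul f (sexp f k).
Proof. by []. Qed.

Lemma sexpD f a b : sexp f (a + b) = smul (sexp f a) (sexp f b).
Proof.
elim: a => [|a IH]; first by rewrite add0n smul1.
by rewrite addSn !sexpS IH smulA.
Qed.

Lemma sexpM f g k : sexp (smul f g) k = smul (sexp f k) (sexp g k).
Proof.
elim: k => [|k IH]; first by rewrite /= smul1.
rewrite !sexpS IH !smulA; congr smul.
by rewrite -!smulA [smul g (sexp f k)]smulC.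
Qed.

Lemma sexpZ c f k : sexp (sscale c f) k = sscale (c ^+ k) (sexp f k).
Proof.
elim: k => [|k IH].
  by apply: functional_extensionality => n; rewrite /sscale mul1r.
rewrite !sexpS IH smulZl smulZr; apply: functional_extensionality => n.
by rewrite /sscale mulrA exprS.
Qed.

Lemma sexp1 k : sexp (sone K) k = sone K.
Proof. by elim: k => [|k IH] //; rewrite sexpS IH smul1. Qed.

Lemma sexp_small f k l : f 0%N = 0 -> (l < k)%N -> sexp f k l = 0.
Proof.
move=> f0; elim: k l => [|k IH] l //= hl.
rewrite /smul big1 // => i _.
case: (posnP i) => [->|hi]; first by rewrite f0 mul0r.
by rewrite IH ?mulr0 //; have := ltn_ord i; lia.
Qed.

Definition sdelta k : nat -> K := fun n => (n == k)%:R.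

Lemma smul_sdelta k f n :
  smul (sdelta k) f n = if (k <= n)%N then f (n - k)%N else 0.
Proof.
rewrite /smul /sdelta; case: ifP => hk.
  rewrite (bigD1 (Ordinal (hk : k < n.+1)%N)) //= eqxx mul1r big1 ?addr0 // => i hi.
  rewrite (_ : (_ == k) = false) ?mul0r //.
  by apply/negbTE; apply: contra hi => /eqP ik; apply/eqP/val_inj.
rewrite big1 // => i _; rewrite (_ : (_ == k) = false) ?mul0r //.
by apply/negbTE/eqP => ik; move: (ltn_ord i); rewrite ik ltnS hk.
Qed.

Lemma sexp_sX k : sexp (sX K) k = sdelta k.
Proof.
elim: k => [|k IH] //; rewrite sexpS IH smulC.
apply: functional_extensionality => n; rewrite smul_sdelta /sX /sdelta.
case: (leqP k n) => h.
  by rewrite (_ : (n - k == 1)%N = (n == k.+1)) //; apply/eqP/eqP; lia.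
by rewrite (_ : (n == k.+1) = false) //; apply/eqP; lia.
Qed.

End SeriesAlgebra.

Lemma hockey_stick b n :
  (\sum_(i < n.+1) 'C(n - i + b, b) = 'C(n + b.+1, b.+1))%N.
Proof.
elim: n => [|n IH]; first by rewrite big_ord1 sub0n add0n !binn.
rewrite big_ord_recl subn0 (eq_bigr (fun i : 'I_n.+1 => 'C(n - i + b, b))) //.
by rewrite IH -addSnnS binS addnC addSn addnS.
Qed.

Section SeriesCoefficients.
Variable K : numFieldType.

Lemma big_ord_widen_zero (F : nat -> K) l n : (l <= n)%N ->
  (forall k, (l < k)%N -> F k = 0) ->
  \sum_(k < l.+1) F k = \sum_(k < n.+1) F k.
Proof.
move=> hl F0; rewrite (big_ord_widen n.+1 F) ?ltnS // big_mkcond.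
by apply: eq_bigr => i _; case: ifP => // /negbT; rewrite -leqNgt => /F0.
Qed.

Lemma sexp_sgeom b n : sexp (sgeom K) b.+1 n = 'C(n + b, b)%:R.
Proof.
elim: b n => [|b IH] n; first by rewrite sexpS smulC smul1 bin0.
rewrite sexpS /smul (eq_bigr (fun i : 'I_n.+1 => 'C(n - i + b, b)%:R)).
  by rewrite -natr_sum hockey_stick addnS.
by move=> i _; rewrite IH mul1r.
Qed.

Lemma smul_s1mX_sgeom : smul (s1mX K) (sgeom K) = sone K.
Proof.
rewrite /s1mX smulBl smul1; apply: functional_extensionality => n.
rewrite -/(sdelta K 1) smul_sdelta /sgeom /sone.
by case: n => [|n] //=; rewrite ?subr0 ?subrr.
Qed.

Lemma smul_sexp_s1mX_sgeom s :
  smul (sexp (s1mX K) s) (sexp (sgeom K) s) = sone K.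
Proof. by rewrite -sexpM smul_s1mX_sgeom sexp1. Qed.

Lemma sxdivE : sxdiv K = sscale (-1) (smul (sX K) (sgeom K)).
Proof. by apply: functional_extensionality => n; rewrite /sscale mulN1r. Qed.

Lemma sxdiv0 : sxdiv K 0%N = 0.
Proof. by rewrite /sxdiv /smul big_ord1 /sX mul0r oppr0. Qed.

(* (1 - x)^s (x/(x-1))^k = (-1)^k x^k (1 - x)^(s - k) *)
Lemma coef_s1mX_sxdiv s k n : (s < k)%N ->
  smul (sexp (s1mX K) s) (sexp (sxdiv K) k) n =
  if (k <= n)%N then (-1) ^+ k * 'C(n - s.+1, k - s.+1)%:R else 0.
Proof.
move=> hsk; rewrite sxdivE sexpZ sexpM smulZr sexp_sX.
have -> : k = (s + (k - s.+1).+1)%N by lia.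
rewrite sexpD -smulA [smul (sexp _ s) (sdelta _ _)]smulC smulA.
rewrite -[smul (sexp _ s) (smul _ _)]smulA smul_sexp_s1mX_sgeom smul1.
rewrite /sscale smul_sdelta; case: ifP => h; last by rewrite mulr0.
by rewrite sexp_sgeom; congr (_ * _%:R); congr 'C(_, _); lia.
Qed.

End SeriesCoefficients.

Section BinomialTransform.
Variable K : numFieldType.
Implicit Types g h : nat -> K.

Definition alt_binom_sum M a b : K :=
  \sum_(i < M.+1) (-1) ^+ i * 'C(M, i)%:R * 'C(a + i, b)%:R.

Lemma alt_binom_sumS M a b :
  alt_binom_sum M.+1 a b = alt_binom_sum M a b - alt_binom_sum M a.+1 b.
Proof.
rewrite /alt_binom_sum big_ord_recl.
rewrite [X in _ = X - _](_ : _ = \sum_(i < M.+2)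
    (-1) ^+ i * 'C(M, i)%:R * 'C(a + i, b)%:R); last first.
  by rewrite [RHS]big_ord_recr /= bin_small // mulr0 mul0r addr0.
rewrite [in RHS]big_ord_recl !bin0 -addrA; congr (_ + _).
rewrite -sumrB; apply: eq_bigr => i _; rewrite lift0 binS natrD.
by rewrite addnS -addSn exprS; ring.
Qed.

Lemma alt_binom_sumE M a b :
  alt_binom_sum M a b = if (M <= b)%N then (-1) ^+ M * 'C(a, b - M)%:R else 0.
Proof.
elim: M a => [|M IH] a.
  by rewrite /alt_binom_sum big_ord1 bin0 !mul1r addn0 subn0.
rewrite alt_binom_sumS !IH; case: (ltngtP M b) => [hMb|//|<-].
- by rewrite (_ : (b - M = (b - M.+1).+1)%N) ?binS ?natrD ?exprS; [ring | lia].
- by rewrite subrr.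
- by rewrite subnn !bin0 subrr.
Qed.

Definition btrans g : nat -> K :=
  fun a => \sum_(b < a.+1) (-1) ^+ b * 'C(a, b)%:R * g b.

Lemma btransB g h a :
  btrans (fun b => g b - h b) a = btrans g a - btrans h a.
Proof. by rewrite /btrans -sumrB; apply: eq_bigr => i _; rewrite mulrBr. Qed.

Lemma btransK g : btrans (btrans g) =1 g.
Proof.
move=> a; rewrite /btrans.
pose T (b c : nat) := (-1) ^+ b * 'C(a, b)%:R * ((-1) ^+ c * 'C(b, c)%:R * g c).
rewrite (eq_bigr (fun b : 'I_a.+1 => \sum_(c < a.+1) T b c)); last first.
  move=> b _; rewrite mulr_sumr; apply: (big_ord_widen_zero (F := T b)).
  - by rewrite -ltnS.
  - by move=> c hc; rewrite /T (bin_small hc) mulr0 mul0r mulr0.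
rewrite exchange_big /=.
rewrite (eq_bigr (fun c : 'I_a.+1 => (-1) ^+ c * g c * alt_binom_sum a 0 c)); last first.
  move=> c _; rewrite mulr_sumr; apply: eq_bigr => b _; rewrite /T add0n; ring.
rewrite big_ord_recr /= big1 ?add0r => [|c _]; last first.
  by rewrite alt_binom_sumE leqNgt ltn_ord mulr0.
by rewrite alt_binom_sumE leqnn subnn bin0 mulr1 mulrAC -expr2 sqrr_sign mul1r.
Qed.

Definition cweight m i : K := (-1) ^+ i * 'C(m, i)%:R * ((m + i)%:R / m%:R).

Definition cform m g : K := \sum_(i < m.+1) cweight m i * g (m.-1 + i)%N.

Lemma cformB m g h : cform m (fun b => g b - h b) = cform m g - cform m h.
Proof. by rewrite /cform -sumrB; apply: eq_bigr => i _; rewrite mulrBr. Qed.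

Lemma bin_succ_ratio n j :
  'C(n.+1, j.+1)%:R * j.+1%:R / n.+1%:R = 'C(n, j)%:R :> K.
Proof.
have nz : n.+1%:R != 0 :> K by rewrite pnatr_eq0.
by rewrite -natrM mulnC -mul_bin_diag natrM mulrAC divff // mul1r.
Qed.

Lemma sum_cweight_bin_alt n b :
  \sum_(i < n.+2) cweight n.+1 i * 'C(n + i, b)%:R =
  alt_binom_sum n.+1 n b - alt_binom_sum n n.+1 b.
Proof.
have nz : n.+1%:R != 0 :> K by rewrite pnatr_eq0.
transitivity (\sum_(i < n.+2) ((-1) ^+ i * 'C(n.+1, i)%:R * 'C(n + i, b)%:R
   + (-1) ^+ i * ('C(n.+1, i)%:R * i%:R / n.+1%:R) * 'C(n + i, b)%:R : K)).
  by apply: eq_bigr => i _; rewrite /cweight natrD mulrDl divff //; ring.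
rewrite big_split /=; congr (_ + _).
rewrite big_ord_recl /= mulr0 !mul0r mulr0 mul0r add0r /alt_binom_sum -sumrN.
apply: eq_bigr => j _; rewrite /bump /= add1n bin_succ_ratio exprS addnS -addSn.
ring.
Qed.

Lemma sum_cweight_binE n b :
  (-1) ^+ b * \sum_(i < n.+2) cweight n.+1 i * 'C(n + i, b)%:R =
  if (n <= b)%N then - cweight n.+1 (b - n) else 0.
Proof.
rewrite sum_cweight_bin_alt !alt_binom_sumE; case: (leqP n b) => [|hbn]; last first.
  by rewrite ifN ?subrr ?mulr0 // -leqNgt ltnW.
move=> /subnKC <-; rewrite addKn /cweight.
have nz : n.+1%:R != 0 :> K by rewrite pnatr_eq0.
case: (b - n)%N => [|q].
  rewrite !addn0 ltnn !bin0 divff // -(signr_odd _ n).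
  by case: (odd n); rewrite /= ?expr0 ?expr1; ring.
rewrite addnS ltnS leq_addr subSS addKn -(bin_succ_ratio n q).
rewrite !exprS exprD -(signr_odd _ n) -(signr_odd _ q).
rewrite -natr1 addrC in nz.
by case: (odd n); case: (odd q); rewrite /= ?expr0 ?expr1; field.
Qed.

Lemma cform_btrans n g : cform n.+1 (btrans g) = - cform n.+1 g.
Proof.
rewrite /cform /btrans /=.
pose T (i b : nat) := cweight n.+1 i * ((-1) ^+ b * 'C(n + i, b)%:R * g b).
rewrite (eq_bigr (fun i : 'I_n.+2 => \sum_(b < (n + n.+1).+1) T i b)); last first.
  move=> i _; rewrite mulr_sumr; apply: (big_ord_widen_zero (F := T i)).
  - by rewrite leq_add2l -ltnS.
  - by move=> b hb; rewrite /T (bin_small hb) mulr0 mul0r mulr0.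
have sumT b : \sum_(i < n.+2) T i b =
    (-1) ^+ b * (\sum_(i < n.+2) cweight n.+1 i * 'C(n + i, b)%:R) * g b.
  by rewrite mulr_sumr mulr_suml; apply: eq_bigr => i _; rewrite /T; ring.
rewrite exchange_big /= -addnS big_split_ord /=.
rewrite big1 ?add0r => [|b _]; last first.
  by rewrite sumT sum_cweight_binE ifN -?ltnNge ?mul0r.
rewrite -sumrN; apply: eq_bigr => p _.
by rewrite sumT sum_cweight_binE leq_addr addKn mulNr.
Qed.

(* Triangularity: c_(n+1) is the first form involving h_(2n+1), with
   coefficient 2 (-1)^(n+1), and anti-fixedness at an even index a reads
   h_a = - h_a modulo lower terms. *)
Lemma btrans_antifixed_eq0 h :
  btrans h =1 (fun a => - h a) -> (forall n, cform n.+1 h = 0) -> h =1 (fun=> 0).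
Proof.
move=> hN hc; suff low N a : (a < N)%N -> h a = 0 by move=> a; apply: (low a.+1).
elim: N a => [//|N IH] a; rewrite ltnS leq_eqVlt => /predU1P [->|]; last exact: IH.
have [oddN|evenN] := boolP (odd N).
- have N2 : N = (N./2 + N./2.+1)%N.
    by rewrite -{1}(odd_double_half N) oddN addnS -addnn.
  have := hc N./2; rewrite /cform big_ord_recr /= big1 => [|i _]; last first.
    by rewrite IH ?mulr0 //; have := ltn_ord i; lia.
  rewrite add0r -N2 /cweight binn natrD mulrDl divff ?pnatr_eq0 // mulr1.
  move/eqP; rewrite !mulf_eq0 signr_eq0 /= -mulr2n mulrn_eq0 oner_eq0 /=.
  by move/eqP.
- have := hN N; rewrite /btrans big_ord_recr /= big1 => [|i _]; last first.
    by rewrite IH ?mulr0.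
  rewrite add0r binn mulr1 -signr_odd (negbTE evenN) mul1r => /eqP.
  by rewrite eq_sym eqNr => /eqP.
Qed.

Lemma btrans_fixedP g : btrans g =1 g <-> (forall n, cform n.+1 g = 0).
Proof.
split=> [fix_g n | cg0].
  have cform_fix : cform n.+1 (btrans g) = cform n.+1 g.
    by apply: eq_bigr => i _; rewrite fix_g.
  by apply/eqP; rewrite -eqNr -cform_btrans cform_fix.
pose h b := g b - btrans g b.
have h0 : h =1 (fun=> 0).
  apply: btrans_antifixed_eq0 => [b|n]; first by rewrite /h btransB btransK opprB.
  by rewrite /h cformB cform_btrans cg0 oppr0 subr0.
by move=> a; apply/eqP; rewrite eq_sym -subr_eq0; apply/eqP/h0.
Qed.

End BinomialTransform.

Section SxdivComposition.
Variable K : numFieldType.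
Implicit Types (u phi psi : nat -> K).

Lemma smul_invP (a b : nat -> K) u phi : smul a b = sone K ->
  (forall n, u n = smul b phi n) <-> smul a u = phi.
Proof.
move=> ab1; split=> [u_eq | <- n].
  have -> : u = smul b phi by apply: functional_extensionality.
  by rewrite -smulA ab1 smul1.
by rewrite -smulA [smul b a]smulC ab1 smul1.
Qed.

Lemma smul_scomp (a : nat -> K) phi psi n : psi 0%N = 0 ->
  smul a (scomp phi psi) n = \sum_(k < n.+1) phi k * smul a (sexp psi k) n.
Proof.
move=> psi0; rewrite /smul /scomp.
pose T i k := a i * (phi k * sexp psi k (n - i)).
rewrite (eq_bigr (fun i : 'I_n.+1 => \sum_(k < n.+1) T i k)); last first.
  move=> i _; rewrite mulr_sumr; apply: (big_ord_widen_zero (F := T i)).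
  - exact: leq_subr.
  - by move=> k hk; rewrite /T sexp_small ?mulr0.
rewrite exchange_big /=; apply: eq_bigr => k _; rewrite mulr_sumr.
by apply: eq_bigr => i _; rewrite /T; ring.
Qed.

Section VanishingLowCoefficients.
Variables (s : nat) (phi : nat -> K).
Hypothesis phi0 : forall i, (i <= s)%N -> phi i = 0.

Lemma coef_sxdiv_comp_small n : (n <= s)%N ->
  smul (sexp (s1mX K) s) (scomp phi (sxdiv K)) n = 0.
Proof.
move=> hn; rewrite smul_scomp ?sxdiv0 // big1 // => k _.
by rewrite phi0 ?mul0r // (leq_trans _ hn) // -ltnS.
Qed.

(* the sign (-1)^(s+1+b) of coef_s1mX_sxdiv is (-1)^b because s is odd *)
Lemma coef_sxdiv_comp_shift n : odd s ->
  smul (sexp (s1mX K) s) (scomp phi (sxdiv K)) (s.+1 + n)%N =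
  btrans (fun b => phi (s.+1 + b)%N) n.
Proof.
move=> odd_s; rewrite smul_scomp ?sxdiv0 // -addnS big_split_ord /=.
rewrite big1 ?add0r => [|k _]; last by rewrite phi0 ?mul0r // -ltnS.
apply: eq_bigr => b _.
rewrite -sexpS coef_s1mX_sxdiv ?ltnS ?leq_addr // -addSn leq_add2l -ltnS ltn_ord.
by rewrite !addKn exprD -signr_odd /= odd_s expr0 mul1r; ring.
Qed.

Lemma sxdiv_comp_fixedP : odd s ->
  smul (sexp (s1mX K) s) (scomp phi (sxdiv K)) = phi <->
  btrans (fun b => phi (s.+1 + b)%N) =1 (fun b => phi (s.+1 + b)%N).
Proof.
move=> odd_s; split=> [fix_phi n | fix_g].
  by rewrite -coef_sxdiv_comp_shift // fix_phi.
apply: functional_extensionality => n; case: (leqP n s) => hn.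
  by rewrite coef_sxdiv_comp_small // phi0.
by rewrite -(subnKC hn) coef_sxdiv_comp_shift // fix_g.
Qed.

End VanishingLowCoefficients.
End SxdivComposition.

Theorem corollary4p8 (K : numFieldType) (gamma : nat -> K) (r : int) :
  r < 0 -> odd `|r|%N ->
  (forall i : nat, (i <= `|r|)%N -> gamma i = 0) ->
  (in_F r gamma <->
   forall m : nat, (0 < m)%N ->
     \sum_(i < m.+1) (-1) ^+ i * 'C(m, i)%:R * ((m + i)%:R / m%:R)
                     * gamma (m + `|r| + i)%N = 0).
Proof.
case: r => [//|k] /= _ odd_s gamma0; set s := k.+1 in gamma0 *.
rewrite /in_F /= (smul_invP _ _ (smul_sexp_s1mX_sgeom K s)).
rewrite (sxdiv_comp_fixedP gamma0 odd_s) btrans_fixedP.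
have cformE m : cform m.+1 (fun b => gamma (s.+1 + b)%N) =
    \sum_(i < m.+2) (-1) ^+ i * 'C(m.+1, i)%:R * ((m.+1 + i)%:R / m.+1%:R)
                    * gamma (m.+1 + s + i)%N.
  by apply: eq_bigr => i _; congr (_ * gamma _); lia.
by split=> [cg0 [|m] // _ | cg0 m]; [rewrite -cformE | rewrite cformE]; apply: cg0.
Qed.
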